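(* Let $n\ge1$ and let $K_2$ be the closure of the $4$--braid $(\sigma_2\sigma_1\sigma_3\sigma_2)(\sigma_1\sigma_2\sigma_3)^{4n}\sigma_3^{-1}(\sigma_2\sigma_3)^6$. Then, up to units $\pm t^i$, \[\Delta_{K_2}(t)=\sum_{i=0}^n(t^{8n+12+4i}-t^{8n+11+4i})+(t^{8n+9}-t^{8n+8})+\sum_{i=0}^{2n-1}(t^{4n+8+2i}-t^{4n+7+2i})+(t^{4n+6}-t^{4n+4})+(t^{4n+3}-t^{4n+1})+\sum_{i=0}^{n-1}(t^{4+4i}-t^{1+4i})+1.\]
   Context: $\sigma_1,\sigma_2,\sigma_3$ are the standard Artin generators of the $4$--strand braid group; $\Delta_K$ denotes the Alexander polynomial. *)

From HB Require Import structures.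
From mathcomp Require Import all_boot all_order all_algebra.
Set Implicit Arguments. Unset Strict Implicit. Unset Printing Implicit Defensive.
Import Order.TTheory GRing.Theory Num.Theory.
Local Open Scope ring_scope.

(* Laurent polynomials in t are handled inside the field of rational
   functions Q(t) realised as {fraction {poly int}}, with t = 'X. *)
Definition LT := {fraction {poly int}}.
Definition tvar : LT := tofrac 'X.
Definition polyF (p : {poly int}) : LT := tofrac p.

(* A braid word on m strands: a sequence of nonzero integers; the letter
   k > 0 stands for sigma_k and -k for sigma_k^{-1} (1 <= k <= m-1). *)
Definition braid_word := seq int.

(* Unreduced Burau matrix of sigma_k (1-based k) on m strands:
   identity except for the 2x2 block [[1-t, t],[1, 0]] at rows/columns k-1, k. *)
Definition burau_gen (m k : nat) : 'M[LT]_m :=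
  \matrix_(i < m, j < m)
    if (i == k.-1 :> nat) && (j == k.-1 :> nat) then 1 - tvar
    else if (i == k.-1 :> nat) && (j == k :> nat) then tvar
    else if (i == k :> nat) && (j == k.-1 :> nat) then 1
    else if (i == k.-1 :> nat) || (i == k :> nat) then 0
    else (i == j)%:R.

Definition burau_letter (m : nat) (g : int) : 'M[LT]_m :=
  if (0 <= g)%R then burau_gen m `|g|%N else invmx (burau_gen m `|g|%N).

Definition burau (m : nat) (w : braid_word) : 'M[LT]_m :=
  foldr (fun g M => burau_letter m g *m M) 1%:M w.

(* Alexander polynomial of the closure of a braid on m.+1 strands:
   the (m x m) minor (last row and column deleted) of the Alexander matrix
   I - Burau(beta), which is the abelianized Fox Jacobian of the Artin
   presentation < x_1..x_{m+1} | x_i = beta(x_i) > of the knot group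
   of the closure.  Well defined up to units +-t^k (for knots). *)
Definition alexander_closure (m : nat) (w : braid_word) : LT :=
  \det (\matrix_(i < m, j < m)
          ((1%:M - burau m.+1 w) (lift ord_max i) (lift ord_max j))).

Definition eq_up_to_units (a b : LT) : Prop :=
  exists (s : bool) (k : int), a = (-1) ^+ s * tvar ^ k * b.

Definition K2_word (n : nat) : braid_word :=
  [:: 2; 1; 3; 2]%R ++ flatten (nseq (4 * n) [:: 1; 2; 3]%R) ++ [:: (-3)%R]
    ++ flatten (nseq 6 [:: 2; 3]%R).

From HB Require Import structures.
From mathcomp Require Import all_boot all_order all_algebra.
From mathcomp Require Import ring zify.
Import Order.TTheory GRing.Theory Num.Theory.
Local Open Scope ring_scope.

(* Write U for the rank-one matrix (column of ones) * (1, t, t^2, t^3).  The Burau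
   matrix of the full twist (s1 s2 s3)^4 is t^4 I + (1 - t) U, and
   U^2 = (1 + t + t^2 + t^3) U, so its n-th power is x I + (1 - t) g U with
   x = t^(4n) and g = sum_(i<n) t^(4i), i.e. x = 1 + (t^4 - 1) g.  Every Burau matrix
   fixes the column of ones on the right and the row (1, t, t^2, t^3) on the left, so
   the Burau matrix of the braid is x B0 + (1 - t) g U, where B0 is the explicit Burau
   matrix of the braid for n = 0.  Scaling by t clears the t^-1 coming from s3^-1, so
   t^3 Delta is the leading 3x3 minor of t I - x (t B0) - t (1 - t) g U, a polynomial
   in t and g once x is eliminated; it equals t^6 times the claimed polynomial. *)

Lemma burau_cons m g w : burau m (g :: w) = burau_letter m g *m burau m w.
Proof. by []. Qed.

Lemma burau_seq1 m g : burau m [:: g] = burau_letter m g.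
Proof. exact: mulmx1. Qed.

Lemma burau_cat m w1 w2 : burau m (w1 ++ w2) = burau m w1 *m burau m w2.
Proof. by elim: w1 => [|g w IHw] /=; rewrite ?mul1mx // IHw mulmxA. Qed.

Lemma burau_flatten_nseq m k w : burau m (flatten (nseq k w)) = burau m w ^+ k.
Proof. by elim: k => [|k IHk] //=; rewrite burau_cat IHk exprS mulmxE. Qed.

Section ScalarPlusQuasiIdempotent.
Variables (R : comPzRingType) (m : nat) (q : R) (P : 'M[R]_m).
Hypothesis PP : P *m P = (1 - q) *: P.

Lemma expr_scalar_addmx k :
  (q%:M + P) ^+ k = (q ^+ k)%:M + (\sum_(i < k) q ^+ i) *: P.
Proof.
elim: k => [|k IHk]; first by rewrite expr0 big_ord0 scale0r addr0.
rewrite exprSr IHk -mulmxE mulmxDl !mulmxDr -scalar_mxM -exprSr -!scalemxAl PP.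
rewrite mul_scalar_mx mul_mx_scalar !scalerA big_ord_recr /= -addrA; congr (_ + _).
by rewrite -!scalerDl; congr (_ *: _); ring.
Qed.

End ScalarPlusQuasiIdempotent.

Lemma mulmx_scalar_add_rank1 {R : comPzRingType} {m : nat} {A Z : 'M[R]_m}
    {u : 'cV[R]_m} {r : 'rV[R]_m} (x c : R) :
  A *m u = u -> r *m Z = r ->
  A *m ((x%:M + c *: (u *m r)) *m Z) = x *: (A *m Z) + c *: (u *m r).
Proof.
move=> Au rZ; rewrite mulmxDl mul_scalar_mx mulmxDr -scalemxAl -!scalemxAr.
by rewrite -mulmxA rZ mulmxA Au.
Qed.

(* For non-invertible [A], [invmx A = A], so no invertibility hypothesis is needed. *)
Lemma mulmx_invmx_fixed (R : comUnitRingType) m n (x : 'M[R]_(m, n)) (A : 'M[R]_n) :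
  x *m A = x -> x *m invmx A = x.
Proof.
case uA: (A \in unitmx) => xA; last by rewrite invmx_out // inE uA.
by rewrite -{1}xA mulmxK.
Qed.

Lemma invmx_mulmx_fixed (R : comUnitRingType) m n (x : 'M[R]_(m, n)) (A : 'M[R]_m) :
  A *m x = x -> invmx A *m x = x.
Proof.
case uA: (A \in unitmx) => Ax; last by rewrite invmx_out // inE uA.
by rewrite -{1}Ax mulKmx.
Qed.

Lemma det_mx33 (R : comPzRingType) (f : nat -> nat -> R) :
  \det (\matrix_(i < 3, j < 3) f i j) =
    f 0 0 * (f 1 1 * f 2 2 - f 1 2 * f 2 1)
  - f 0 1 * (f 1 0 * f 2 2 - f 1 2 * f 2 0)
  + f 0 2 * (f 1 0 * f 2 1 - f 1 1 * f 2 0).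
Proof.
rewrite (expand_det_row _ 0) !big_ord_recl big_ord0 /cofactor.
rewrite !(expand_det_row _ 0) !big_ord_recl !big_ord0 /cofactor !det_mx11 !mxE /=.
ring.
Qed.

Lemma alexander_closure_scale (c : LT) m w :
  c ^+ m * alexander_closure m w =
  \det (\matrix_(i < m, j < m) ((c%:M - c *: burau m.+1 w) (lift ord_max i) (lift ord_max j))).
Proof.
rewrite /alexander_closure -detZ; congr (\det _); apply/matrixP => i j.
by rewrite !mxE mulrBr mulr_natr.
Qed.

Lemma rmorph_sum_Xdiff (S : nzRingType) (R : pzRingType) (f : {rmorphism {poly S} -> R})
    (k a b c : nat) :
  f (\sum_(0 <= i < k) ('X^(a + c * i) - 'X^(b + c * i))) =
  \sum_(i < k) (f 'X ^+ a - f 'X ^+ b) * (f 'X ^+ c) ^+ i.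
Proof.
rewrite rmorph_sum big_mkord; apply: eq_bigr => i _.
by rewrite rmorphB !rmorphXn !exprD !exprM mulrBl.
Qed.

Lemma sum_expr_double (R : comPzRingType) (q : R) n :
  \sum_(i < 2 * n) q ^+ i = (1 + q) * \sum_(i < n) (q ^+ 2) ^+ i.
Proof.
elim: n => [|n IHn]; first by rewrite muln0 !big_ord0 mulr0.
have -> : (2 * n.+1 = (2 * n).+2)%N by lia.
by rewrite !big_ord_recr /= IHn -exprM (exprS q (2 * n)); ring.
Qed.

Local Notation entry L i j := (nth 0 (nth [::] L i) j).

Section ExplicitMx4.
Context {R : pzRingType}.

Definition mx4 (L : seq (seq R)) : 'M[R]_4 := \matrix_(i, j) entry L i j.

Definition mul4 (L1 L2 : seq (seq R)) : seq (seq R) :=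
  mkseq (fun i => mkseq (fun j =>
      entry L1 i 0 * entry L2 0 j + entry L1 i 1 * entry L2 1 j
    + entry L1 i 2 * entry L2 2 j + entry L1 i 3 * entry L2 3 j) 4) 4.

Lemma mx4_mul L1 L2 : mx4 L1 *m mx4 L2 = mx4 (mul4 L1 L2).
Proof.
apply/matrixP => i j; rewrite !mxE !nth_mkseq // !big_ord_recl big_ord0 !mxE.
by rewrite addr0 !addrA.
Qed.

Lemma mx4_eqP L1 L2 : (forall i j : 'I_4, entry L1 i j = entry L2 i j) -> mx4 L1 = mx4 L2.
Proof. by move=> E; apply/matrixP => i j; rewrite !mxE E. Qed.

Lemma mulmx4E m n (A : 'M[R]_(m, 4)) (B : 'M[R]_(4, n)) i j :
  (A *m B) i j = A i (@Ordinal 4 0 isT) * B (@Ordinal 4 0 isT) j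
               + A i (@Ordinal 4 1 isT) * B (@Ordinal 4 1 isT) j
               + A i (@Ordinal 4 2 isT) * B (@Ordinal 4 2 isT) j
               + A i (@Ordinal 4 3 isT) * B (@Ordinal 4 3 isT) j.
Proof.
rewrite mxE !big_ord_recl big_ord0 addr0 !addrA.
by congr (_ + _ + _ + _); congr (A i _ * B _ j); apply: val_inj.
Qed.

End ExplicitMx4.

(* Nested products of explicit matrices are multiplied out by evaluating [mul4]:
   rewriting them entry by entry with [mxE] is far slower. *)
Ltac mx4_ring :=
  apply: mx4_eqP => - [[|[|[|[|?]]]] ?]; last by [];
  (case=> [[|[|[|[|?]]]] ?]; last by []);
  lazy beta iota zeta delta [mul4 mkseq map iota nth nat_of_ord]; ring.

Ltac mx_entries :=
  let i := fresh "i" in let j := fresh "j" in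
  apply/matrixP => i j; rewrite ?mulmx4E ?mxE ?big_ord1 ?mxE;
  case: i => [[|[|[|[|?]]]] ?] //; case: j => [[|[|[|[|?]]]] ?] //=; ring.

Local Notation t := tvar.

Lemma tvar_neq0 : t != 0.
Proof. by rewrite tofrac_eq0 polyX_eq0. Qed.

Definition ones4 : 'cV[LT]_4 := const_mx 1.
Definition tpow_row : 'rV[LT]_4 := \row_(j < 4) t ^+ j.

Lemma burau_gen4_ones k : (0 < k < 4)%N -> burau_gen 4 k *m ones4 = ones4.
Proof. by case: k => [|[|[|[|k]]]] // _; mx_entries. Qed.

Lemma tpow_row_burau_gen4 k : (0 < k < 4)%N -> tpow_row *m burau_gen 4 k = tpow_row.
Proof. by case: k => [|[|[|[|k]]]] // _; mx_entries. Qed.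

Lemma burau4_ones w :
  all (fun g : int => (0 < `|g| < 4)%N) w -> burau 4 w *m ones4 = ones4.
Proof.
elim: w => [|g w IHw] /=; first by rewrite mul1mx.
case/andP=> g_ok /IHw Bw1; rewrite -mulmxA Bw1 /burau_letter.
by case: ifP => _; [|apply: invmx_mulmx_fixed]; apply: burau_gen4_ones.
Qed.

Lemma tpow_row_burau4 w :
  all (fun g : int => (0 < `|g| < 4)%N) w -> tpow_row *m burau 4 w = tpow_row.
Proof.
elim: w => [|g w IHw] /=; first by rewrite mulmx1.
case/andP=> g_ok /IHw rB; rewrite mulmxA /burau_letter.
by case: ifP => _; [|rewrite mulmx_invmx_fixed]; rewrite ?tpow_row_burau_gen4.
Qed.

Lemma burau_sigma1 :
  burau_letter 4 1 = mx4 [:: [:: 1 - t; t; 0; 0]; [:: 1; 0; 0; 0];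
                             [:: 0; 0; 1; 0]; [:: 0; 0; 0; 1]].
Proof. by rewrite /burau_letter /=; mx_entries. Qed.

Lemma burau_sigma2 :
  burau_letter 4 2 = mx4 [:: [:: 1; 0; 0; 0]; [:: 0; 1 - t; t; 0];
                             [:: 0; 1; 0; 0]; [:: 0; 0; 0; 1]].
Proof. by rewrite /burau_letter /=; mx_entries. Qed.

Lemma burau_sigma3 :
  burau_letter 4 3 = mx4 [:: [:: 1; 0; 0; 0]; [:: 0; 1; 0; 0];
                             [:: 0; 0; 1 - t; t]; [:: 0; 0; 1; 0]].
Proof. by rewrite /burau_letter /=; mx_entries. Qed.

Lemma burau_sigma3_inv :
  burau_letter 4 (-3) = t^-1 *: mx4 [:: [:: t; 0; 0; 0]; [:: 0; t; 0; 0];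
                                        [:: 0; 0; 0; t]; [:: 0; 0; 1; t - 1]].
Proof.
set N := mx4 _.
have sigma3N : burau_gen 4 3 *m N = t%:M by rewrite /N; mx_entries.
have sigma3V : burau_gen 4 3 *m (t^-1 *: N) = 1%:M.
  by rewrite -scalemxAr sigma3N scale_scalar_mx mulVf ?tvar_neq0.
have [unit_sigma3 _] := mulmx1_unit sigma3V.
by rewrite /burau_letter /= -[LHS]mulmx1 -sigma3V mulmxA mulVmx ?mul1mx.
Qed.

Lemma burau_full_twist4 :
  burau 4 (flatten (nseq 4 [:: 1; 2; 3])) = (t ^+ 4)%:M + (1 - t) *: (ones4 *m tpow_row).
Proof.
have cycle : burau 4 [:: 1; 2; 3] = mx4 [:: [:: 1 - t; t - t ^+ 2; t ^+ 2 - t ^+ 3; t ^+ 3];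
                                             [:: 1; 0; 0; 0];
                                             [:: 0; 1; 0; 0];
                                             [:: 0; 0; 1; 0]].
  rewrite 2!burau_cons burau_seq1 burau_sigma1 burau_sigma2 burau_sigma3.
  by rewrite !mx4_mul; mx4_ring.
have -> : (t ^+ 4)%:M + (1 - t) *: (ones4 *m tpow_row) =
          mx4 [:: [:: 1 - t + t ^+ 4; t - t ^+ 2; t ^+ 2 - t ^+ 3; t ^+ 3 - t ^+ 4];
               [:: 1 - t; t - t ^+ 2 + t ^+ 4; t ^+ 2 - t ^+ 3; t ^+ 3 - t ^+ 4];
               [:: 1 - t; t - t ^+ 2; t ^+ 2 - t ^+ 3 + t ^+ 4; t ^+ 3 - t ^+ 4];
               [:: 1 - t; t - t ^+ 2; t ^+ 2 - t ^+ 3; t ^+ 3]].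
  by mx_entries.
have -> : flatten (nseq 4 [:: 1; 2; 3]) =
          [:: 1; 2; 3] ++ [:: 1; 2; 3] ++ [:: 1; 2; 3] ++ [:: 1; 2; 3] by [].
by rewrite !burau_cat cycle !mx4_mul; mx4_ring.
Qed.

Lemma ones_tpow_row_sqr :
  ones4 *m tpow_row *m (ones4 *m tpow_row) = (1 + t + t ^+ 2 + t ^+ 3) *: (ones4 *m tpow_row).
Proof.
have row_ones : tpow_row *m ones4 = (1 + t + t ^+ 2 + t ^+ 3)%:M by mx_entries.
by rewrite mulmxA -(mulmxA ones4) row_ones mul_mx_scalar scalemxAl.
Qed.

Lemma burau_full_twist4_pow n :
  burau 4 (flatten (nseq (4 * n) [:: 1; 2; 3])) =
  ((t ^+ 4) ^+ n)%:M + ((1 - t) * \sum_(i < n) (t ^+ 4) ^+ i) *: (ones4 *m tpow_row).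
Proof.
rewrite burau_flatten_nseq exprM -burau_flatten_nseq burau_full_twist4.
rewrite expr_scalar_addmx ?scalerA 1?mulrC // -scalemxAl -scalemxAr.
by rewrite ones_tpow_row_sqr !scalerA; congr (_ *: _); ring.
Qed.

Lemma burau_full_twist234 :
  burau 4 (flatten (nseq 3 [:: 2; 3])) =
  mx4 [:: [:: 1; 0; 0; 0];
          [:: 0; 1 - t + t ^+ 3; t - t ^+ 2; t ^+ 2 - t ^+ 3];
          [:: 0; 1 - t; t - t ^+ 2 + t ^+ 3; t ^+ 2 - t ^+ 3];
          [:: 0; 1 - t; t - t ^+ 2; t ^+ 2]].
Proof.
have -> : flatten (nseq 3 [:: 2; 3]) = [:: 2; 3] ++ [:: 2; 3] ++ [:: 2; 3] by [].
by rewrite !burau_cat burau_cons burau_seq1 burau_sigma2 burau_sigma3 !mx4_mul; mx4_ring.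
Qed.

Lemma burau_K2_word_split n :
  burau 4 (K2_word n) =
  burau 4 [:: 2; 1; 3; 2] *m (burau 4 (flatten (nseq (4 * n) [:: 1; 2; 3]))
                             *m burau 4 (-3 :: flatten (nseq 6 [:: 2; 3]))).
Proof. by rewrite /K2_word (burau_cat _ [:: 2; 1; 3; 2]) burau_cat. Qed.

Definition K2_base : seq (seq LT) :=
  [:: [:: t - t ^+ 2; t ^+ 2 - t ^+ 3 + t ^+ 5 - t ^+ 6 + t ^+ 8 - t ^+ 9;
          t ^+ 3 - t ^+ 4 + t ^+ 6 - t ^+ 7; t ^+ 4 - t ^+ 5 + t ^+ 7 - t ^+ 8 + t ^+ 9];
      [:: t - t ^+ 2; t ^+ 2 - t ^+ 3 + t ^+ 5 - t ^+ 6 + t ^+ 8 - t ^+ 9;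
          t ^+ 3 - t ^+ 4 + t ^+ 6 - t ^+ 7 + t ^+ 8; t ^+ 4 - t ^+ 5 + t ^+ 7 - 2%:R * t ^+ 8 + t ^+ 9];
      [:: t; 0; 0; 0];
      [:: 0; t - t ^+ 2 + t ^+ 4 - t ^+ 5 + t ^+ 7; t ^+ 2 - t ^+ 3 + t ^+ 5 - t ^+ 6;
          t ^+ 3 - t ^+ 4 + t ^+ 6 - t ^+ 7]].

Lemma burau_K2_word0 : t *: burau 4 (K2_word 0) = mx4 K2_base.
Proof.
have prefix : burau 4 [:: 2; 1; 3; 2] = mx4 [:: [:: 1 - t; t - t ^+ 2; t ^+ 2; 0];
                                                [:: 1 - t; t - t ^+ 2; 0; t ^+ 2];
                                                [:: 1; 0; 0; 0];
                                                [:: 0; 1; 0; 0]].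
  rewrite 3!burau_cons burau_seq1 burau_sigma1 burau_sigma2 burau_sigma3.
  by rewrite !mx4_mul; mx4_ring.
rewrite burau_K2_word_split burau_full_twist4_pow expr0 big_ord0 mulr0 scale0r addr0 mul1mx.
have -> : flatten (nseq 6 [:: 2; 3]) = flatten (nseq 3 [:: 2; 3]) ++ flatten (nseq 3 [:: 2; 3]).
  by [].
rewrite prefix burau_cons burau_sigma3_inv burau_cat burau_full_twist234.
rewrite -scalemxAl -scalemxAr scalerA mulfV ?tvar_neq0 // scale1r !mx4_mul.
mx4_ring.
Qed.

Lemma burau_K2_word n :
  burau 4 (K2_word n) = (t ^+ 4) ^+ n *: burau 4 (K2_word 0)
    + ((1 - t) * \sum_(i < n) (t ^+ 4) ^+ i) *: (ones4 *m tpow_row).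
Proof.
have Au := @burau4_ones [:: 2; 1; 3; 2] isT.
have rZ := @tpow_row_burau4 (-3 :: flatten (nseq 6 [:: 2; 3])) isT.
rewrite [LHS]burau_K2_word_split burau_full_twist4_pow [LHS](mulmx_scalar_add_rank1 _ _ Au rZ).
by rewrite burau_K2_word_split burau_full_twist4_pow expr0 big_ord0 mulr0 scale0r addr0 mul1mx.
Qed.

Definition K2_alexander_entry n (i j : nat) : LT :=
  (i == j)%:R * t - (t ^+ 4) ^+ n * entry K2_base i j
  - t * (1 - t) * (\sum_(k < n) (t ^+ 4) ^+ k) * t ^+ j.

Lemma alexander_K2 n :
  t ^+ 3 * alexander_closure 3 (K2_word n) =
  \det (\matrix_(i < 3, j < 3) K2_alexander_entry n i j).
Proof.
rewrite alexander_closure_scale burau_K2_word scalerDr scalerA mulrC -[(_ * t) *: _]scalerA.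
rewrite burau_K2_word0 scalerA; congr (\det _); apply/matrixP => i j.
rewrite !mxE big_ord1 !mxE !lift_max (inj_eq lift_inj) /K2_alexander_entry mulr_natl.
ring.
Qed.

Theorem theorem3p2 (n : nat) (hn : (1 <= n)%N) :
  eq_up_to_units (alexander_closure 3 (K2_word n))
    (polyF (
        \sum_(0 <= i < n.+1) ('X^(8 * n + 12 + 4 * i) - 'X^(8 * n + 11 + 4 * i))
      + ('X^(8 * n + 9) - 'X^(8 * n + 8))
      + \sum_(0 <= i < 2 * n) ('X^(4 * n + 8 + 2 * i) - 'X^(4 * n + 7 + 2 * i))
      + ('X^(4 * n + 6) - 'X^(4 * n + 4))
      + ('X^(4 * n + 3) - 'X^(4 * n + 1))
      + \sum_(0 <= i < n) ('X^(4 + 4 * i) - 'X^(1 + 4 * i))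
      + 1)).
Proof.
(* The identity also holds for [n = 0]. *)
exists false, 3%:Z; rewrite expr0 mul1r; change (t ^ 3%:Z) with (t ^+ 3).
apply: (mulfI (expf_neq0 3 tvar_neq0)).
rewrite alexander_K2 det_mx33 /K2_alexander_entry /=.
rewrite /polyF !rmorphD !rmorph_sum_Xdiff -!mulr_sumr !rmorphN !rmorphXn !rmorph1.
have t4n k : t ^+ (4 * n + k) = (t ^+ 4) ^+ n * t ^+ k by rewrite exprD exprM.
have t8n k : t ^+ (8 * n + k) = ((t ^+ 4) ^+ n) ^+ 2 * t ^+ k.
  by rewrite exprD -!exprM; congr (_ ^+ _ * _); lia.
have sumS (q : LT) : \sum_(i < n.+1) q ^+ i = \sum_(i < n) q ^+ i + q ^+ n.
  by rewrite big_ord_recr.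
have t22 : (t ^+ 2) ^+ 2 = t ^+ 4 by rewrite -exprM.
have x_geom : (t ^+ 4) ^+ n = 1 + (t ^+ 4 - 1) * \sum_(i < n) (t ^+ 4) ^+ i.
  by rewrite -subrX1 addrC subrK.
rewrite !t8n !t4n sumS sum_expr_double t22 x_geom.
ring.
Qed.
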